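(* For every $1\le i\le n$ and every $v\in V$, the following identity holds in $H_\zeta'(\mathfrak{sp}_{2n})$: \[ \sum_{j=1}^{2n}\sum_{e\in B}\left\{\frac{\partial\mathcal{Q}_i}{\partial e},v\right\}e(v_j)\,v_j^*=0. \]
   Context: Let $V=\mathbb{C}^{2n}$ with basis $v_1,\dots,v_{2n}$ and symplectic form $\omega(x,y)=x^TJy$, where $J$ is block diagonal with $n$ blocks $\begin{pmatrix}0&1\\-1&0\end{pmatrix}$; $\mathfrak{sp}_{2n}=\{A:A^TJ+JA=0\}$ acting on $V$. Let $v_1^*,\dots,v_{2n}^*$ be the basis with $\omega(v_i,v_j^* )=\delta_{ij}$. Identify $S(\mathfrak{sp}_{2n})$ with polynomial functions of $A\in\mathfrak{sp}_{2n}$ via the trace form. $B$ is a basis of $\mathfrak{sp}_{2n}$; for $F\in S(\mathfrak{sp}_{2n})$ written as a polynomial in the elements of $B$, $\partial F/\partial e$ ($e\in B$) denotes the partial derivative with respect to $e$. For $j\ge0$ let $\mathfrak{r}_j(x,y)\in S(\mathfrak{sp}_{2n})$ be the coefficient of $z^j$ in $\omega(x,(1-z^2A^2)^{-1}y)\det(1-zA)^{-1}$; for $\zeta_0,\zeta_2,\dots,\zeta_{2k}\in\mathbb{C}$, $H_\zeta'(\mathfrak{sp}_{2n})$ is the commutative algebra $S(\mathfrak{sp}_{2n})\otimes S(V)$ with the Poisson bracket determined by $\{a,b\}=[a,b]$ ($a,b\in\mathfrak{sp}_{2n}$), $\{g,v\}=g(v)$ ($g\in\mathfrak{sp}_{2n}$,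 $v\in V$), $\{x,y\}=\sum_j\zeta_{2j}\mathfrak{r}_{2j}(x,y)$ ($x,y\in V$). Define $\mathcal{Q}_i\in S(\mathfrak{sp}_{2n})$ by $\sum_{i=0}^n\mathcal{Q}_iz^{2i}=\det(1-zA)$. *)

From HB Require Import structures.
From mathcomp Require Import all_boot all_order all_algebra.
From mathcomp Require Import reals complex.
From mathcomp Require Import mpoly.

Set Implicit Arguments.
Unset Strict Implicit.
Unset Printing Implicit Defensive.

Import Order.TTheory GRing.Theory Num.Theory.
Local Open Scope ring_scope.

Section SpDefs.
Variable C : fieldType.

(* The symplectic Gram matrix J on C^(2n): block diagonal with n blocks
   [[0,1],[-1,0]].  Basis vectors v_1..v_2n are the indices 0..2n-1. *)
Definition Jmx (n : nat) : 'M[C]_(2 * n) :=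
  \matrix_(i, j)
    (if ~~ odd i && (j == i.+1 :> nat) then 1
     else if odd i && (j.+1 == i :> nat) then -1 else 0).

Definition omega (n : nat) (x y : 'cV[C]_(2 * n)) : C := (x^T *m Jmx n *m y) 0 0.

Definition is_sp (n : nat) (A : 'M[C]_(2 * n)) : Prop :=
  A^T *m Jmx n + Jmx n *m A = 0.

Definition is_basis_sp (n m : nat) (B : 'I_m -> 'M[C]_(2 * n)) : Prop :=
  [/\ forall k, is_sp (B k),
      (forall c : 'I_m -> C, \sum_k c k *: B k = 0 -> forall k, c k = 0)
    & forall A, is_sp A -> exists c : 'I_m -> C, A = \sum_k c k *: B k].

(* the standard basis vector v_j and the dual vector vstar_j determined by
   omega(v_i, v_j^star) = delta_ij, i.e. J vstar_j = v_j *)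
Definition vbas (n : nat) (j : 'I_(2 * n)) : 'cV[C]_(2 * n) := delta_mx j 0.
Definition vstar (n : nat) (j : 'I_(2 * n)) : 'cV[C]_(2 * n) :=
  invmx (Jmx n) *m vbas j.

(* The commutative algebra S(sp_2n) (x) S(V), realised as the polynomial
   ring in m + 2n variables: 'X_(xi k) stands for the basis element B k of
   sp_2n, and 'X_(yi j) stands for the basis vector v_j of V. *)

Definition xi (n m : nat) (k : 'I_m) : 'I_(m + 2 * n) := lshift (2 * n) k.
Definition yi (n m : nat) (j : 'I_(2 * n)) : 'I_(m + 2 * n) := rshift m j.

Definition linV (n m : nat) (u : 'cV[C]_(2 * n)) : {mpoly C[m + 2 * n]} :=
  \sum_(j < 2 * n) (u j 0)%:MP * 'X_(yi m j).

Definition gramB (n m : nat) (B : 'I_m -> 'M[C]_(2 * n)) : 'M[C]_m :=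
  \matrix_(k, l) \tr (B k *m B l).
Definition dualB (n m : nat) (B : 'I_m -> 'M[C]_(2 * n)) (k : 'I_m)
  : 'M[C]_(2 * n) := \sum_l invmx (gramB B) k l *: B l.

(* The "generic element" A of sp_2n with entries in S(sp_2n): identifying
   S(sp_2n) with polynomial functions of A via the trace form, the basis
   element B k is the function A |-> tr(B k * A); writing A in the
   trace-dual basis, A = sum_k x_k (dualB k), this function is x_k. *)
Definition genA (n m : nat) (B : 'I_m -> 'M[C]_(2 * n)) : 'M[{mpoly C[m + 2 * n]}]_(2 * n) :=
  \sum_k 'X_(xi n k) *: map_mx (fun c : C => c%:MP) (dualB B k).

Definition Qcoef (n m : nat) (B : 'I_m -> 'M[C]_(2 * n)) (i : nat) : {mpoly C[m + 2 * n]} :=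
  (\det (1%:M - 'X *: map_mx polyC (genA B)))`_(2 * i).

Definition pder (n m : nat) (k : 'I_m) (F : {mpoly C[m + 2 * n]}) : {mpoly C[m + 2 * n]} :=
  mderiv (xi n k) F.

(* Poisson bracket {F, v} for F in S(sp_2n), v in V, determined by
   {g, v} = g(v) and the Leibniz rule: {F, v} = sum_e dF/de * e(v). *)
Definition brSV (n m : nat) (B : 'I_m -> 'M[C]_(2 * n)) (F : {mpoly C[m + 2 * n]})
    (v : 'cV[C]_(2 * n)) : {mpoly C[m + 2 * n]} :=
  \sum_k pder k F * linV m (B k *m v).

End SpDefs.

Arguments Jmx {C} n.
Arguments vbas {C n} j.
Arguments vstar {C n} j.

(* Write D_c for the derivation sum_k c_k d/de_k of S(sp_2n) (x) S(V).  The
   elements q_k = sum_j e_k(v_j) v_j^* and mu_k = e_k(v) lie in S(V), so they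
   are constants for every D_c and the sum equals D_mu (D_q Q_i).  By the
   trace-dual basis, the derivation with c_k = tr(e_k X) sends the generic
   element A to (X + J X^T J) / 2, the projection of X onto sp_2n.  Hence,
   with y the column of generators of S(V), D_q A = J y y^T has rank one and
   D_mu A = (v y^T + J y (J^T v)^T) / 2.  For U = 1 - zA, Jacobi's formula
   yields
     det U * D_mu D_q det U
       = tr(D_mu U adj U) tr(D_q U adj U) - tr(D_q U adj U D_mu U adj U),
   and for D_q U = u w^T, D_mu U = p w^T + u r^T both terms equal
   (w^T adj U u)(w^T adj U p + r^T adj U u).  As det U is 1 at z = 0, it is
   nonzero, so D_mu D_q det(1 - zA) = 0: the identity holds for every
   coefficient of det(1 - zA), not only for 1 <= i <= n. *)

From HB Require Import structures.
From mathcomp Require Import all_boot all_order all_algebra.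
From mathcomp Require Import reals complex.
From mathcomp Require Import mpoly.
From mathcomp Require Import perm.
From mathcomp Require Import ring.

Set Implicit Arguments.
Unset Strict Implicit.
Unset Printing Implicit Defensive.

Import GRing.Theory.
Local Open Scope ring_scope.

Section Derivation.
Variables (S : comNzRingType) (d : {additive S -> S}).
Hypothesis derivM : forall x y, d (x * y) = d x * y + x * d y.

Lemma derivation1 : d 1 = 0.
Proof.
have := derivM 1 1; rewrite !mulr1 mul1r => h.
by apply/(addrI (d 1)); rewrite -h addr0.
Qed.

Lemma derivation_sign k : d ((-1) ^+ k) = 0.
Proof.
elim: k => [|k IHk]; first by rewrite expr0 derivation1.
by rewrite exprS derivM IHk mulr0 addr0 raddfN derivation1 oppr0 mul0r.
Qed.

Lemma derivation_prod k (F : 'I_k -> S) :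
  d (\prod_i F i) = \sum_i \prod_j (if j == i then d (F j) else F j).
Proof.
elim: k F => [|k IHk] F; first by rewrite !big_ord0 derivation1.
rewrite big_ord_recr derivM IHk big_distrl [RHS]big_ord_recr /=; congr (_ + _).
  apply: eq_bigr => i _; rewrite big_ord_recr /=.
  by rewrite -val_eqE /= eqn_leq leqNgt ltn_ord.
rewrite big_ord_recr eqxx; congr (_ * _); apply: eq_bigr => j _.
by rewrite -val_eqE /= ltn_eqF.
Qed.

Lemma map_mx_derivationM p q r (A : 'M[S]_(p, q)) (B : 'M[S]_(q, r)) :
  map_mx d (A *m B) = map_mx d A *m B + A *m map_mx d B.
Proof.
apply/matrixP => a b; rewrite !mxE raddf_sum -big_split.
by apply: eq_bigr => c _; rewrite derivM !mxE.
Qed.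

Lemma derivation_mxtrace k (A : 'M[S]_k) : d (\tr A) = \tr (map_mx d A).
Proof. by rewrite raddf_sum; apply: eq_bigr => i _; rewrite mxE. Qed.

Lemma derivation_det k (U : 'M[S]_k) : d (\det U) = \tr (map_mx d U *m \adj U).
Proof.
rewrite raddf_sum.
transitivity (\sum_i \sum_(s : 'S_k) (-1) ^+ s *
   \prod_j (\matrix_(a, b) (if a == i then d (U a b) else U a b)) j (s j)).
  rewrite exchange_big /=; apply: eq_bigr => s _.
  rewrite derivM derivation_sign mul0r add0r derivation_prod big_distrr /=.
  by apply: eq_bigr => i _; congr (_ * _); apply: eq_bigr => j _; rewrite mxE; case: eqP.
apply: eq_bigr => i _; rewrite -/(determinant _) (expand_det_row _ i) !mxE.
apply: eq_bigr => b _; rewrite !mxE eqxx; congr (_ * (_ * \det _)).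
by apply/matrixP => a c; rewrite !mxE eq_sym (negbTE (neq_lift i a)).
Qed.

Lemma map_mx_derivation_adj k (U : 'M[S]_k) :
  \det U *: map_mx d (\adj U) =
  \tr (map_mx d U *m \adj U) *: \adj U - \adj U *m map_mx d U *m \adj U.
Proof.
have := congr1 (fun X => map_mx d X *m \adj U) (mul_adj_mx U).
have -> : map_mx d (\det U)%:M = (d (\det U))%:M :> 'M_k.
  by apply/matrixP => i j; rewrite !mxE raddfMn.
rewrite /= map_mx_derivationM mulmxDl -mulmxA mul_mx_adj derivation_det.
by rewrite mul_mx_scalar mul_scalar_mx => <-; rewrite addrK.
Qed.

Lemma map_poly_derivationM (p q : {poly S}) :
  map_poly d (p * q) = map_poly d p * q + p * map_poly d q.
Proof.
apply/polyP => i; rewrite coef_map coefD !coefM raddf_sum -big_split.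
by apply: eq_bigr => j _; rewrite derivM !coef_map.
Qed.

Lemma map_mx_derivation_scaleX p q (G : 'M[S]_(p, q)) :
  map_mx (map_poly d) ('X *: map_mx polyC G) = 'X *: map_mx polyC (map_mx d G).
Proof.
apply/matrixP => a b; rewrite !mxE; apply/polyP => t.
by rewrite coef_map !coefXM; case: t => [|t] /=; rewrite ?raddf0 // -coef_map map_polyC.
Qed.

Lemma map_mx_derivation_charmx k (G : 'M[S]_k) :
  map_mx (map_poly d) (1%:M - 'X *: map_mx polyC G)
  = - ('X *: map_mx polyC (map_mx d G)).
Proof.
rewrite map_mxB map_mx_derivation_scaleX -[RHS]sub0r; congr (_ - _).
by apply/matrixP => a b; rewrite !mxE raddfMn /= -polyC1 map_polyC derivation1 mul0rn.
Qed.
End Derivation.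

Lemma det_derivation2 (S : comNzRingType) (d1 d2 : {additive S -> S}) :
    (forall x y, d1 (x * y) = d1 x * y + x * d1 y) ->
    (forall x y, d2 (x * y) = d2 x * y + x * d2 y) ->
  forall k (U : 'M[S]_k), map_mx d2 (map_mx d1 U) = 0 ->
  \det U * d2 (d1 (\det U)) =
  \tr (map_mx d2 U *m \adj U) * \tr (map_mx d1 U *m \adj U)
  - \tr (map_mx d1 U *m \adj U *m map_mx d2 U *m \adj U).
Proof.
move=> d1M d2M k U d21U.
rewrite derivation_det // derivation_mxtrace map_mx_derivationM // d21U mul0mx add0r.
rewrite -[LHS]mxtraceZ [in LHS]scalemxAr map_mx_derivation_adj // mulmxBr raddfB /=.
by rewrite -scalemxAr mxtraceZ mulrC !mulmxA.
Qed.

Lemma mxtrace_rank_one (S : comNzRingType) k (u w : 'cV[S]_k) (X : 'M[S]_k) :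
  \tr (u *m w^T *m X) = (w^T *m X *m u) 0 0.
Proof. by rewrite -mulmxA mxtrace_mulC /mxtrace big_ord1. Qed.

Lemma mxtrace_rank_one_cancel (S : comNzRingType) k (M : 'M[S]_k) (u w p r : 'cV[S]_k) :
  \tr ((p *m w^T + u *m r^T) *m M) * \tr (u *m w^T *m M)
  = \tr (u *m w^T *m M *m (p *m w^T + u *m r^T) *m M).
Proof.
have mx11M (X Y : 'M[S]_1) : (X *m Y) 0 0 = X 0 0 * Y 0 0 by rewrite !mxE big_ord1.
rewrite mulmxDl mxtraceD !mxtrace_rank_one.
have -> : u *m w^T *m M *m (p *m w^T + u *m r^T) *m M
        = u *m w^T *m (M *m (p *m w^T + u *m r^T) *m M) by rewrite !mulmxA.
rewrite mxtrace_rank_one.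
have -> : w^T *m (M *m (p *m w^T + u *m r^T) *m M) *m u
        = (w^T *m M *m p) *m (w^T *m M *m u) + (w^T *m M *m u) *m (r^T *m M *m u).
  by rewrite !(mulmxDr, mulmxDl) !mulmxA.
by rewrite [in RHS]mxE !mx11M; ring.
Qed.

Lemma det_derivation2_rank_one (S : comNzRingType) (d1 d2 : {additive S -> S}) :
    (forall x y, d1 (x * y) = d1 x * y + x * d1 y) ->
    (forall x y, d2 (x * y) = d2 x * y + x * d2 y) ->
  forall k (U : 'M[S]_k) (a b : S) (u w p r : 'cV[S]_k),
  map_mx d1 U = a *: (u *m w^T) -> map_mx d2 U = b *: (p *m w^T + u *m r^T) ->
  map_mx d2 (map_mx d1 U) = 0 -> \det U * d2 (d1 (\det U)) = 0.
Proof.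
move=> d1M d2M k U a b u w p r d1U d2U d21U.
rewrite det_derivation2 // d1U d2U -!scalemxAl !mxtraceZ -scalemxAr -scalemxAl !mxtraceZ.
by rewrite mulrACA mxtrace_rank_one_cancel mulrA [b * a]mulrC subrr.
Qed.

Lemma mxtrace_mul_delta (R : pzRingType) k (A : 'M[R]_k) i j :
  \tr (A *m delta_mx i j) = A j i.
Proof.
rewrite /mxtrace (bigD1 j) //= big1 => [|a /negbTE neq_aj]; last first.
  by rewrite mxE big1 // => b _; rewrite mxE neq_aj andbF mulr0.
rewrite addr0 mxE (bigD1 i) //= big1 => [|b /negbTE neq_bi]; last by rewrite mxE neq_bi mulr0.
by rewrite addr0 mxE !eqxx mulr1.
Qed.

Lemma mulmx_delta_mxE (R : pzRingType) p k q (A : 'M[R]_(p, k)) (A' : 'M[R]_(k, q)) i j a b :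
  (A *m delta_mx i j *m A') a b = A a i * A' j b.
Proof.
have Adelta c : (A *m delta_mx i j) a c = A a i * (c == j)%:R.
  rewrite mxE (bigD1 i) //= big1 => [|t /negbTE neq_ti]; last by rewrite mxE neq_ti mulr0.
  by rewrite addr0 mxE eqxx.
rewrite mxE (bigD1 j) //= big1 => [|c /negbTE neq_cj]; last by rewrite Adelta neq_cj mulr0 mul0r.
by rewrite addr0 Adelta eqxx mulr1.
Qed.

Section SymplecticForm.
Variables (C : fieldType) (n : nat).
Local Notation J := (Jmx n : 'M[C]_(2 * n)).

Definition partner (a : nat) := if odd a then a.-1 else a.+1.
Definition psign (a : nat) : C := if odd a then -1 else 1.

Lemma partnerK : involutive partner.
Proof. by rewrite /partner => -[|a] //=; case odd_a: (odd a) => /=; rewrite odd_a. Qed.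

Lemma psign_partner a : psign (partner a) = - psign a.
Proof.
by rewrite /psign /partner; case: a => [|a] //=; case odd_a: (odd a); rewrite /= odd_a ?opprK.
Qed.

Lemma partner_lt a : (a < 2 * n)%N -> (partner a < 2 * n)%N.
Proof.
rewrite /partner; case: ifP => [_|even_a] lt_a; first exact: leq_ltn_trans (leq_pred a) lt_a.
rewrite ltn_neqAle lt_a andbT; apply: contraFneq even_a => /(congr1 odd).
by rewrite /= oddM => /negbFE.
Qed.

Lemma JmxE (a b : 'I_(2 * n)) : J a b = if b == partner a :> nat then psign a else 0.
Proof. by rewrite mxE /partner /psign; case: a => [[|a]] //= _; case: (odd a). Qed.

Lemma trmx_Jmx : J^T = - J.
Proof.
apply/matrixP => a b; rewrite [LHS]mxE [RHS]mxE !JmxE.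
have [->|ne] := eqVneq (a : nat) (partner b); first by rewrite partnerK eqxx psign_partner opprK.
by rewrite ifN ?oppr0 //; apply: contra ne => /eqP ->; rewrite partnerK.
Qed.

Lemma mulJmx_Jmx : J *m J = - 1%:M.
Proof.
apply/matrixP => a b; rewrite !mxE (bigD1 (Ordinal (partner_lt (ltn_ord a)))) //=.
rewrite big1 => [|c /negbTE]; last by rewrite JmxE -val_eqE /= => ->; rewrite mul0r.
rewrite addr0 !JmxE eqxx partnerK psign_partner -val_eqE /= eq_sym.
have psign2 : psign a * psign a = 1 by rewrite /psign; case: ifP; rewrite ?mulrNN mulr1.
by case: eqP; rewrite ?mulrN ?psign2 ?mulr0 ?oppr0.
Qed.

Lemma trmxJ_mulJ : J^T *m J = 1%:M.
Proof. by rewrite trmx_Jmx mulNmx mulJmx_Jmx opprK. Qed.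

Lemma mulJ_trmxJ : J *m J^T = 1%:M.
Proof. by rewrite trmx_Jmx mulmxN mulJmx_Jmx opprK. Qed.

Lemma invmx_Jmx : invmx J = - J.
Proof.
have JJN : J *m - J = 1%:M by rewrite mulmxN mulJmx_Jmx opprK.
by rewrite -[invmx J]mulmx1 -JJN mulmxA mulVmx ?mul1mx // (mulmx1_unit JJN).1.
Qed.

End SymplecticForm.

Section TraceDualBasis.
Variables (C : fieldType) (n m : nat) (B : 'I_m -> 'M[C]_(2 * n)).
Hypothesis two_neq0 : (2%:R : C) != 0.
Local Notation J := (Jmx n : 'M[C]_(2 * n)).

(* The orthogonal projection of gl_2n onto sp_2n for the trace form. *)
Definition sp_proj (E : 'M[C]_(2 * n)) := 2^-1 *: (E + J *m E^T *m J).

Lemma is_sp_proj E : is_sp (sp_proj E).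
Proof.
rewrite /is_sp /sp_proj linearZ /= -scalemxAl -scalemxAr -scalerDr.
have -> : (E + J *m E^T *m J)^T *m J + J *m (E + J *m E^T *m J) = 0.
  rewrite linearD /= !trmx_mul trmxK trmx_Jmx mulmxDl mulmxDr !mulmxA mulJmx_Jmx.
  rewrite !(mulmxN, mulNmx, opprK) -(mulmxA _ (Jmx n)) mulJmx_Jmx mulmxN mulmx1 mul1mx.
  by rewrite -opprB addNr.
by rewrite scaler0.
Qed.

Lemma half_double (x : C) : 2^-1 * (x + x) = x.
Proof. by rewrite -mulr2n -(mulr_natl x 2) mulKf. Qed.

Lemma sp_trmx A : is_sp A -> A^T = J *m A *m J.
Proof.
move/eqP; rewrite addr_eq0 => /eqP spA.
by rewrite -[A^T]mulmx1 -mulJ_trmxJ mulmxA spA trmx_Jmx !(mulNmx, mulmxN) opprK.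
Qed.

Lemma mxtrace_sp_proj A E : is_sp A -> \tr (A *m sp_proj E) = \tr (A *m E).
Proof.
move=> spA; rewrite /sp_proj -scalemxAr mxtraceZ mulmxDr mxtraceD.
have -> : \tr (A *m (J *m E^T *m J)) = \tr (A *m E).
  rewrite -mxtrace_tr !trmx_mul trmxK (sp_trmx spA) !mulmxA -[_ *m J^T *m J]mulmxA.
  by rewrite trmxJ_mulJ mulmx1 mxtrace_mulC !mulmxA mulJ_trmxJ mul1mx mxtrace_mulC.
by rewrite half_double.
Qed.

Lemma is_sp_sum (c : 'I_m -> C) :
  (forall k, is_sp (B k)) -> is_sp (\sum_k c k *: B k).
Proof.
move=> spB; rewrite /is_sp linear_sum mulmx_suml mulmx_sumr -big_split big1 // => k _.
by rewrite /= linearZ -scalemxAl -scalemxAr -scalerDr spB scaler0.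
Qed.

Lemma gramB_unit : is_basis_sp B -> gramB B \in unitmx.
Proof.
case=> spB freeB spanB; rewrite unitmxE unitfE; apply/negP => /det0P [c c_neq0 cG0].
pose X := \sum_k c 0 k *: B k.
have trXB l : \tr (X *m B l) = 0.
  have := congr1 (fun M : 'M[C]_(1, m) => M 0 l) cG0; rewrite !mxE => <-.
  rewrite mulmx_suml raddf_sum /=; apply: eq_bigr => k _.
  by rewrite -scalemxAl mxtraceZ mxE.
have trX E : \tr (X *m E) = 0.
  rewrite -mxtrace_sp_proj; last exact: is_sp_sum.
  have [d ->] := spanB _ (is_sp_proj E).
  rewrite mulmx_sumr raddf_sum /= big1 // => l _.
  by rewrite -scalemxAr mxtraceZ trXB mulr0.
have X0 : X = 0 by apply/matrixP => a b; rewrite mxE -(mxtrace_mul_delta X b a) trX.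
apply: (negP c_neq0); apply/eqP/matrixP => a k.
by rewrite (ord1 a) mxE (freeB _ X0).
Qed.

Lemma dualB_expand : is_basis_sp B ->
  forall X, is_sp X -> \sum_k \tr (B k *m X) *: dualB B k = X.
Proof.
move=> basisB; have unitG := gramB_unit basisB; case: basisB => _ _ spanB X /spanB [c ->].
pose cr : 'rV[C]_m := \row_l c l.
have trBX k : \tr (B k *m \sum_l c l *: B l) = (cr *m gramB B) 0 k.
  rewrite mulmx_sumr raddf_sum /= mxE; apply: eq_bigr => l _.
  by rewrite -scalemxAr mxtraceZ !mxE mxtrace_mulC.
under eq_bigr do rewrite trBX /dualB scaler_sumr.
rewrite exchange_big; apply: eq_bigr => l _ /=.
under eq_bigr do rewrite scalerA.
rewrite -scaler_suml; congr (_ *: _).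
have -> : c l = (cr *m gramB B *m invmx (gramB B)) 0 l by rewrite mulmxK // mxE.
by rewrite [RHS]mxE.
Qed.

Lemma sum_mxtrace_dualB : is_basis_sp B ->
  forall E, \sum_k \tr (B k *m E) *: dualB B k = sp_proj E.
Proof.
move=> basisB E; have [spB _ _] := basisB.
under eq_bigr => k _ do rewrite -(mxtrace_sp_proj E (spB k)).
exact: dualB_expand (is_sp_proj E).
Qed.

Lemma sum_dualB_kernel : is_basis_sp B -> forall a b i j,
  \sum_k B k i j * dualB B k a b
  = 2^-1 * (((a == j) && (b == i))%:R + J a i * J j b).
Proof.
move=> basisB a b i j.
have := congr1 (fun M : 'M[C]_(2 * n) => M a b) (sum_mxtrace_dualB basisB (delta_mx j i)).
rewrite summxE; under eq_bigr do rewrite mxE mxtrace_mul_delta.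
by move=> ->; rewrite /sp_proj trmx_delta mxE mxE (mulmx_delta_mxE J J) mxE.
Qed.
End TraceDualBasis.

Section CoordinateDerivation.
Variables (C : fieldType) (n m : nat).
Local Notation P := {mpoly C[m + 2 * n]}.

Definition xderiv (c : 'I_m -> P) (F : P) : P := \sum_k c k * pder k F.

Fact xderiv_is_zmod_morphism c : GRing.zmod_morphism (xderiv c).
Proof.
by move=> F G; rewrite /xderiv -sumrB; apply: eq_bigr => k _; rewrite /pder raddfB mulrBr.
Qed.

HB.instance Definition _ c :=
  GRing.isZmodMorphism.Build P P (xderiv c) (xderiv_is_zmod_morphism c).

Lemma eq_xderiv c c' : c =1 c' -> xderiv c =1 xderiv c'.
Proof. by move=> eq_c F; apply: eq_bigr => k _; rewrite eq_c. Qed.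

Lemma xderivM c F G : xderiv c (F * G) = xderiv c F * G + F * xderiv c G.
Proof.
rewrite /xderiv big_distrl big_distrr -big_split; apply: eq_bigr => k _ /=.
by rewrite /pder mderivM mulrDr !mulrA [c k * F]mulrC.
Qed.

Lemma xderivC c a : xderiv c a%:MP = 0.
Proof. by rewrite /xderiv big1 // => k _; rewrite /pder mderivC mulr0. Qed.

Lemma mderivXE k (i j : 'I_k) : mderiv i ('X_j : {mpoly C[k]}) = (j == i)%:R.
Proof.
rewrite mderivX mnm1E; case: eqP => [->|_]; last by rewrite scale0r.
have -> : (U_(i) - U_(i))%MM = 0%MM by apply/mnmP => t; rewrite mnmBE subnn mnm0E.
by rewrite mpolyX0 scale1r.
Qed.

Lemma xderivXx c l : xderiv c 'X_(xi n l) = c l.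
Proof.
rewrite /xderiv (bigD1 l) //= big1 => [|k neq_kl]; first by rewrite /pder mderivXE eqxx mulr1 addr0.
by rewrite /pder mderivXE (inj_eq (@lshift_inj _ _)) eq_sym (negbTE neq_kl) mulr0.
Qed.

Lemma xderivXy c j : xderiv c 'X_(yi m j) = 0.
Proof. by rewrite /xderiv big1 // => k _; rewrite /pder mderivXE eq_rlshift mulr0. Qed.

Lemma xderiv_linV c (u : 'cV[C]_(2 * n)) : xderiv c (linV m u) = 0.
Proof.
rewrite /linV raddf_sum /= big1 // => j _.
by rewrite xderivM xderivC xderivXy mul0r mulr0 addr0.
Qed.
End CoordinateDerivation.

Section GenericElement.
Variables (C : fieldType) (n m : nat) (B : 'I_m -> 'M[C]_(2 * n)).
Hypotheses (two_neq0 : (2%:R : C) != 0) (basisB : is_basis_sp B).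
Local Notation P := {mpoly C[m + 2 * n]}.
Local Notation cP := (@mpolyC (m + 2 * n) C).
Local Notation Jp := (map_mx cP (Jmx n)).

Definition yv : 'cV[P]_(2 * n) := \col_a 'X_(yi m a).

Lemma mxtrace_map_mul k (X : 'M[P]_(2 * n)) :
  \tr (map_mx cP (B k) *m X) = \sum_i \sum_j cP (B k i j) * X j i.
Proof. by apply: eq_bigr => i _; rewrite mxE; apply: eq_bigr => j _; rewrite mxE. Qed.

Lemma xderiv_genA c : map_mx (xderiv c) (genA B) = \sum_k c k *: map_mx cP (dualB B k).
Proof.
apply/matrixP => a b; rewrite mxE /genA !summxE raddf_sum /=; apply: eq_bigr => k _.
by rewrite !mxE xderivM xderivXx xderivC mulr0 addr0.
Qed.

Lemma xderiv_genA_mxtrace (X : 'M[P]_(2 * n)) :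
  map_mx (xderiv (fun k => \tr (map_mx cP (B k) *m X))) (genA B)
  = cP 2^-1 *: (X + Jp *m X^T *m Jp).
Proof.
apply/matrixP => a b; rewrite xderiv_genA summxE.
transitivity (\sum_i \sum_j X j i * cP (\sum_k B k i j * dualB B k a b)).
  under eq_bigr do rewrite mxE mxE mxtrace_map_mul mulr_suml.
  rewrite exchange_big; apply: eq_bigr => i _ /=.
  under eq_bigr do rewrite mulr_suml.
  rewrite exchange_big; apply: eq_bigr => j _; rewrite rmorph_sum mulr_sumr.
  by apply: eq_bigr => k _ /=; rewrite rmorphM mulrAC mulrC.
under eq_bigr do under eq_bigr do rewrite sum_dualB_kernel // !rmorphM rmorphD mulrCA mulrDr.
under eq_bigr do rewrite -mulr_sumr.
rewrite -mulr_sumr mxE; congr (_ * _).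
under eq_bigr do rewrite big_split.
rewrite big_split /= mxE; congr (_ + _).
  rewrite (bigD1 b) //= [X in _ + X]big1 ?addr0 => [|i /negbTE neq_ib]; last first.
    by rewrite big1 // => j _; rewrite [b == i]eq_sym neq_ib andbF rmorph0 mulr0.
  rewrite (bigD1 a) //= [X in _ + X]big1 ?addr0 => [|j /negbTE neq_ja]; last first.
    by rewrite eq_sym neq_ja rmorph0 mulr0.
  by rewrite !eqxx rmorph1 mulr1.
rewrite mxE exchange_big; apply: eq_bigr => j _ /=; rewrite [in RHS]mxE mulr_suml.
apply: eq_bigr => i _; rewrite [X^T i j]mxE [map_mx _ _ a i]mxE [map_mx _ _ j b]mxE rmorphM.
by rewrite mulrA [X j i * _]mulrC.
Qed.

Lemma linV_col (u : 'cV[C]_(2 * n)) : linV m u = \sum_a cP (u a 0) * yv a 0.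
Proof. by apply: eq_bigr => a _; rewrite mxE. Qed.

Definition quadV k : P := \sum_j linV m (B k *m vbas j) * linV m (vstar j).

Definition actV (v : 'cV[C]_(2 * n)) l : P := linV m (B l *m v).

Lemma quadV_mxtrace k : quadV k = \tr (map_mx cP (B k) *m (Jp *m yv *m yv^T)).
Proof.
rewrite mxtrace_map_mul /quadV.
transitivity (\sum_j \sum_a \sum_c cP (B k a j) * yv a 0 * (cP (Jmx n j c) * yv c 0)).
  apply: eq_bigr => j _; rewrite !linV_col mulr_suml; apply: eq_bigr => a _.
  rewrite mulr_sumr; apply: eq_bigr => c _.
  rewrite /vstar /vbas invmx_Jmx -!colE -trmx_Jmx.
  by rewrite [col j (B k) a 0]mxE [col j _ c 0]mxE [_^T c j]mxE.
rewrite exchange_big; apply: eq_bigr => a _; apply: eq_bigr => j _.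
rewrite [(_ *m yv^T) j a]mxE big_ord1 [yv^T 0 a]mxE [(Jp *m yv) j 0]mxE !mulr_suml.
by rewrite mulr_sumr; apply: eq_bigr => c _; rewrite [map_mx _ _ j c]mxE; ring.
Qed.

Lemma actV_mxtrace v l : actV v l = \tr (map_mx cP (B l) *m (map_mx cP v *m yv^T)).
Proof.
rewrite /actV linV_col mxtrace_map_mul; apply: eq_bigr => a _.
rewrite mxE rmorph_sum mulr_suml; apply: eq_bigr => b _.
by rewrite [in RHS]mxE big_ord1 [yv^T 0 a]mxE [map_mx _ _ b 0]mxE rmorphM; ring.
Qed.

Lemma map_xderiv_Jyy c : map_mx (xderiv c) (Jp *m yv *m yv^T) = 0.
Proof.
have Jp0 : map_mx (xderiv c) Jp = 0 by apply/matrixP => a b; rewrite !mxE xderivC.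
have yv0 : map_mx (xderiv c) yv = 0 by apply/matrixP => a b; rewrite !mxE xderivXy.
rewrite !(map_mx_derivationM (xderivM c)) -map_trmx Jp0 yv0 trmx0.
by rewrite !(mul0mx, mulmx0, add0r, addr0).
Qed.

Lemma map_trmxJ_mulJ : Jp^T *m Jp = 1%:M.
Proof. by rewrite map_trmx -map_mxM trmxJ_mulJ map_mx1. Qed.

Lemma scale_half_double p q (M : 'M[P]_(p, q)) : cP 2^-1 *: (M + M) = M.
Proof.
by rewrite -mulr2n -scaler_nat scalerA -(rmorph_nat cP) -rmorphM mulVf // rmorph1 scale1r.
Qed.

Lemma xderiv_quadV_genA : map_mx (xderiv quadV) (genA B) = Jp *m yv *m yv^T.
Proof.
rewrite (eq_map_mx _ (eq_xderiv quadV_mxtrace)) xderiv_genA_mxtrace.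
rewrite !trmx_mul trmxK !mulmxA -(mulmxA _ Jp^T) map_trmxJ_mulJ mulmx1.
exact: scale_half_double.
Qed.

Lemma xderiv_actV_genA v :
  map_mx (xderiv (actV v)) (genA B)
  = cP 2^-1 *: (map_mx cP v *m yv^T + Jp *m yv *m (Jp^T *m map_mx cP v)^T).
Proof.
rewrite (eq_map_mx _ (eq_xderiv (actV_mxtrace v))) xderiv_genA_mxtrace.
by rewrite !trmx_mul !trmxK !mulmxA.
Qed.

Lemma sum_bracket_xderiv v (Q : P) :
  \sum_(j < 2 * n) \sum_(k < m)
     brSV B (pder k Q) v * linV m (B k *m vbas j) * linV m (vstar j)
  = xderiv (actV v) (xderiv quadV Q).
Proof.
have brSV_xderiv F : brSV B F v = xderiv (actV v) F.
  by apply: eq_bigr => l _; rewrite mulrC.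
have xderiv_quadV c k : xderiv c (quadV k) = 0.
  by rewrite raddf_sum big1 // => j _; rewrite /= xderivM !xderiv_linV mul0r mulr0 addr0.
rewrite exchange_big [X in xderiv _ X]/xderiv raddf_sum; apply: eq_bigr => k _ /=.
rewrite xderivM xderiv_quadV mul0r add0r brSV_xderiv mulrC /quadV mulr_sumr.
by apply: eq_bigr => j _; rewrite mulrA.
Qed.

Definition charmx : 'M[{poly P}]_(2 * n) := 1%:M - 'X *: map_mx polyC (genA B).

Lemma det_charmx_neq0 : \det charmx != 0.
Proof.
have eval0 : map_mx (horner_eval 0) charmx = 1%:M.
  apply/matrixP => a b; rewrite !mxE rmorphB rmorph_nat rmorphM /=.
  by rewrite horner_evalE hornerX mul0r subr0.
apply: contra_neq (oner_neq0 P) => det0.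
by rewrite -(det1 _ (2 * n)) -eval0 det_map_mx det0 rmorph0.
Qed.

Lemma xderiv2_det_charmx v :
  map_poly (xderiv (actV v)) (map_poly (xderiv quadV) (\det charmx)) = 0.
Proof.
pose u := map_mx polyC (Jp *m yv); pose w := map_mx polyC yv.
pose p := map_mx polyC (map_mx cP v); pose r := map_mx polyC (Jp^T *m map_mx cP v).
have d1M := map_poly_derivationM (xderivM quadV).
have d2M := map_poly_derivationM (xderivM (actV v)).
have d1U : map_mx (map_poly (xderiv quadV)) charmx = - 'X *: (u *m w^T).
  rewrite (map_mx_derivation_charmx (xderivM quadV)) xderiv_quadV_genA.
  by rewrite scaleNr map_mxM (map_trmx polyC).
have d2U : map_mx (map_poly (xderiv (actV v))) charmx
           = - ('X * (cP 2^-1)%:P) *: (p *m w^T + u *m r^T).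
  rewrite (map_mx_derivation_charmx (xderivM (actV v))) xderiv_actV_genA.
  rewrite (map_mxZ polyC) scalerA scaleNr !(map_trmx polyC).
  by rewrite -!(map_mxM polyC) -(map_mxD polyC).
have d21U :
    map_mx (map_poly (xderiv (actV v))) (map_mx (map_poly (xderiv quadV)) charmx) = 0.
  rewrite (map_mx_derivation_charmx (xderivM quadV)) xderiv_quadV_genA.
  by rewrite map_mxN map_mx_derivation_scaleX map_xderiv_Jyy map_mx0 scaler0 oppr0.
have /eqP := det_derivation2_rank_one d1M d2M d1U d2U d21U.
by rewrite mulf_eq0 (negbTE det_charmx_neq0) => /eqP.
Qed.
End GenericElement.

Theorem lemma7p4 (R : realType) (n m : nat)
    (B : 'I_m -> 'M[complex R]_(2 * n)) :
  is_basis_sp B ->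
  forall (i : nat), (1 <= i <= n)%N ->
  forall v : 'cV[complex R]_(2 * n),
    \sum_(j < 2 * n) \sum_(k < m)
       brSV B (pder k (Qcoef B i)) v
       * linV m (B k *m vbas j) * linV m (vstar j) = 0.
Proof.
move=> basisB i _ v.
have two_neq0 : (2%:R : complex R) != 0 by rewrite Num.Theory.pnatr_eq0.
rewrite sum_bracket_xderiv -!coef_map.
by rewrite (xderiv2_det_charmx two_neq0 basisB) coef0.
Qed.
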